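(* Let $I\subseteq[m-1]$ and $J\subseteq[n-1]$. Then $\mathbf m(\kappa_I(\nu),\kappa_J(\nu))=\sum_{K\subseteq[m+n-1]}d_K\,\kappa_K(\nu)$, where $$d_K=\sum_{\substack{A\subseteq[m+n],\ |A|=n:\\ (I\#_AJ)\cap c(A)=\emptyset\\ I\#_AJ\subseteq K\subseteq(I\#_AJ)\cup c(A)}}\left(\frac{1}{1-\nu}\right)^{|K\cap c_2(A)|}.$$
   Context: Fix an integer $\nu>1$ and nonnegative integers $m,n$; $C_\nu$ is the additive cyclic group of order $\nu$. $[a,b]=\{t\in\mathbb Z:a\le t\le b\}$ (empty if $a>b$), $[n]=[1,n]$. $Q_S(\nu)=\bigoplus_{s\in S}C_\nu$; $Q_n(\nu)=Q_{[n-1]}(\nu)$. For $K\subseteq[N-1]$, $\kappa_K(\nu)$ is the function on $Q_N(\nu)$ equal to $1$ at $\mathbf g$ if $\{i:g_i\neq0\}=K$ and $0$ otherwise (superclass identifier). $\psi_\nu(0)=1$, $\psi_\nu(g)=-1/(\nu-1)$ for $g\ne0$. Connectivity: for $A\subseteq[N]$, $\mathrm{conn}(A)$ = maximal subsets of consecutive integers of $A$; $A^c=[N]\setminus A$; $c_1(A)=\{\max B:B\in\mathrm{conn}(A)\}\setminus\{N\}$, $c_2(A)=\{\max B:B\in\mathrm{conn}(A^c)\}\setminus\{N\}$, $c(A)=c_1(A)\cup c_2(A)$; here $N=m+n$. For $A\subseteq[m+n]$ with $|A|=n$, write $A=\{b_1<\dots<b_n\}$, $[m+n]\setminus A=\{a_1<\dots<a_m\}$;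 $I\#_AJ=\{a_i:i\in I\}\cup\{b_j:j\in J\}$. Product: for functions $\phi$ on $Q_m(\nu)$, $\psi$ on $Q_n(\nu)$: if $m=0$ or $n=0$, $\mathbf m_A(\phi,\psi)=\phi\psi$; otherwise $\mathbf m_A(\phi,\psi)(\mathbf g)=\prod_{i\in c_2(A)}\psi_\nu(g_i)\cdot s_A(\phi,\psi)(\mathbf g')$ for $\mathbf g\in Q_{m+n}(\nu)$, with $s_A(\phi,\psi)(\mathbf h)=\phi(h_{a_1},\dots,h_{a_{m-1}})\psi_\nu(h_{a_m})\psi(h_{b_1},\dots,h_{b_{n-1}})\psi_\nu(h_{b_n})$ on $Q_{[m+n]}(\nu)$ and $\mathbf g'$ equal to $\mathbf g$ on $[m+n-1]\setminus c(A)$ and $0$ on $c(A)\cup\{m+n\}$. $\mathbf m=\sum_A\mathbf m_A$ over all $n$-subsets $A$ of $[m+n]$. *)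

From HB Require Import structures.
From mathcomp Require Import all_boot all_order all_algebra.
Set Implicit Arguments. Unset Strict Implicit. Unset Printing Implicit Defensive.
Import Order.TTheory GRing.Theory Num.Theory.
Local Open Scope ring_scope.

(* Q_N(nu) = (+)_{s in [N-1]} C_nu.  Coordinate s (1 <= s <= N-1) of g is
   g (s-1), i.e. the ordinal i : 'I_(N.-1) stands for the integer i+1.
   C_nu is 'Z_nu (we always assume 1 < nu). *)
Definition Q (nu N : nat) := {ffun 'I_(N.-1) -> 'Z_nu}.

(* A subset K of [N-1] is a {set 'I_(N.-1)} with the same shift convention. *)

Definition kappa (R : numFieldType) (nu N : nat) (K : {set 'I_(N.-1)}) (g : Q nu N) : R :=
  if [set i | g i != 0] == K then 1 else 0.

Definition psinu (R : numFieldType) (nu : nat) (x : 'Z_nu) : R :=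
  if x == 0 then 1 else - (nu.-1%:R)^-1.

(* coordinate g_k of g in Q_N, for k a positive integer (0 outside [1,N-1]) *)
Definition coord (nu N : nat) (g : Q nu N) (k : nat) : 'Z_nu :=
  if k is k'.+1 then
    (if (insub k' : option 'I_(N.-1)) is Some i then g i else 0)
  else 0.

(* Subsets A of [N] are {set 'I_N}, ordinal i standing for the integer i+1.
   Integer membership: *)
Definition inS (N : nat) (A : {set 'I_N}) (k : nat) : bool :=
  [exists i in A, ((val i).+1 == k)%N].

(* c_1(A) = { max B : B in conn(A) } \ {N}: k is the maximum of a maximal run
   of consecutive integers of A iff k in A and k+1 notin A. *)
Definition c1 (N : nat) (A : {set 'I_N}) (k : nat) : bool :=
  [&& inS A k, ~~ inS A k.+1 & k != N].

(* c_2(A) = { max B : B in conn([N] \ A) } \ {N}: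
   k in [N] \ A and k+1 notin [N] \ A, k <> N. *)
Definition c2 (N : nat) (A : {set 'I_N}) (k : nat) : bool :=
  [&& (1 <= k <= N)%N, ~~ inS A k, ~~ ((1 <= k.+1 <= N)%N && ~~ inS A k.+1) & k != N].

Definition cA (N : nat) (A : {set 'I_N}) (k : nat) : bool := c1 A k || c2 A k.

(* A = {b_1 < ... < b_n},  [N] \ A = {a_1 < ... < a_m} *)
Definition bseq (N : nat) (A : {set 'I_N}) : seq nat :=
  sort leq [seq (val i).+1 | i <- enum A].
Definition aseq (N : nat) (A : {set 'I_N}) : seq nat :=
  sort leq [seq (val i).+1 | i <- enum (~: A)].
Definition bA (N : nat) (A : {set 'I_N}) (j : nat) : nat := nth 0%N (bseq A) j.-1.
Definition aA (N : nat) (A : {set 'I_N}) (i : nat) : nat := nth 0%N (aseq A) i.-1.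

Definition sharp (m n : nat) (I : {set 'I_(m.-1)}) (J : {set 'I_(n.-1)})
  (A : {set 'I_(m + n)}) (k : nat) : bool :=
  [exists i in I, aA A (val i).+1 == k] || [exists j in J, bA A (val j).+1 == k].

Definition sA (R : numFieldType) (nu m n : nat) (A : {set 'I_(m + n)})
  (phi : Q nu m -> R) (psi : Q nu n -> R) (h : nat -> 'Z_nu) : R :=
  phi [ffun i : 'I_(m.-1) => h (aA A (val i).+1)] * psinu R (h (aA A m)) *
  psi [ffun j : 'I_(n.-1) => h (bA A (val j).+1)] * psinu R (h (bA A n)).

(* m_A(phi,psi).  When m = 0 or n = 0 there is a single A, and
   phi psi is encoded via the canonical identification Q_{m+n} = Q_m (+) Q_n
   (one factor being trivial): g |-> (g_{a_i})_i, (g_{b_j})_j. *)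
Definition mA (R : numFieldType) (nu m n : nat) (A : {set 'I_(m + n)})
  (phi : Q nu m -> R) (psi : Q nu n -> R) (g : Q nu (m + n)) : R :=
  if (m == 0)%N || (n == 0)%N then
    phi [ffun i : 'I_(m.-1) => coord g (aA A (val i).+1)] *
    psi [ffun j : 'I_(n.-1) => coord g (bA A (val j).+1)]
  else
    (\prod_(1 <= k < m + n | c2 A k) psinu R (coord g k)) *
    sA A phi psi (fun k => if cA A k || (k == m + n)%N then 0 else coord g k).

Definition mprod (R : numFieldType) (nu m n : nat)
  (phi : Q nu m -> R) (psi : Q nu n -> R) (g : Q nu (m + n)) : R :=
  \sum_(A : {set 'I_(m + n)} | #|A| == n) mA A phi psi g.

Definition dK (R : numFieldType) (nu m n : nat) (I : {set 'I_(m.-1)}) (J : {set 'I_(n.-1)})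
  (K : {set 'I_((m + n).-1)}) : R :=
  \sum_(A : {set 'I_(m + n)} |
          [&& #|A| == n,
              [forall k : 'I_(m + n).+2, ~~ (sharp I J A k && cA A k)],
              [forall k : 'I_(m + n).+2, sharp I J A k ==> inS K k] &
              [forall k : 'I_(m + n).+2, inS K k ==> (sharp I J A k || cA A k)]])
    ((1 - nu%:R)^-1) ^+ #|[set i in K | c2 A (val i).+1]|.

From HB Require Import structures.
From mathcomp Require Import all_boot all_order all_algebra.
Import Order.TTheory GRing.Theory Num.Theory.
Local Open Scope ring_scope.
Set Implicit Arguments. Unset Strict Implicit. Unset Printing Implicit Defensive.

(* kappa_K(g) vanishes unless K is the support of g, so the right-hand side is
   d_K for K = supp g, and it suffices to evaluate each m_A(kappa_I, kappa_J)(g).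
   The last coordinates a_m and b_n are either m+n or lie in c(A), so g' vanishes
   there and the two psi_nu factors of s_A equal 1, while the factors psi_nu(g_k),
   k in c_2(A), contribute (1/(1-nu))^|supp g /\ c_2(A)|.  What remains,
   kappa_I * kappa_J, tests whether supp g' read along a_1 < ... < a_(m-1) is I and
   along b_1 < ... < b_(n-1) is J.  Since [m+n] is the disjoint union of the a's
   and the b's, and supp g' = supp g \ c(A) avoids a_m and b_n, this says exactly
   that I #_A J = supp g \ c(A), the summation condition of d_K. *)

Lemma exists_nth_mem (s : seq nat) p (X : {set 'I_p}) k :
  (p <= size s)%N -> [exists i in X, nth 0%N s i == k] -> k \in s.
Proof.
by move=> ps /existsP [i /andP [_ /eqP <-]]; rewrite mem_nth // (leq_trans _ ps).
Qed.

Lemma set_nth_eqE (s : seq nat) p (X : {set 'I_p.-1}) (P : pred nat) :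
  uniq s -> size s = p -> ~~ P (last 0%N s) ->
  ([set i : 'I_p.-1 | P (nth 0%N s i)] == X) =
  all (fun k => [exists i in X, nth 0%N s i == k] == P k) s.
Proof.
move=> s_uniq s_size P_last.
have lt_size (i : 'I_p.-1) : (i < size s)%N.
  by rewrite s_size (leq_trans (ltn_ord i)) // leq_pred.
have nth_inj (i : 'I_p.-1) j :
    (j < size s)%N -> (nth 0%N s i == nth 0%N s j) = (i == j :> nat).
  by move=> js; rewrite nth_uniq.
have exists_nthE (i : 'I_p.-1) : [exists j in X, nth 0%N s j == nth 0%N s i] = (i \in X).
  apply/existsP/idP => [[j /andP [jX]]|iX]; last by exists i; rewrite iX eqxx.
  by rewrite nth_inj // => /eqP/val_inj <-.
apply/eqP/allP => [X_def k ks | P_agree]; last first.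
  apply/setP => i; rewrite inE -exists_nthE.
  by have /eqP := P_agree _ (mem_nth 0%N (lt_size i)).
have js : (index k s < size s)%N by rewrite index_mem.
rewrite -(nth_index 0%N ks); case: (ltnP (index k s) p.-1) => [jp | pj].
  by rewrite -[index k s]/(val (Ordinal jp)) exists_nthE -X_def inE.
have -> : index k s = (size s).-1.
  by apply/eqP; rewrite eqn_leq s_size pj -ltnS prednK // -s_size (leq_ltn_trans _ js).
rewrite nth_last (negbTE P_last) eqbF_neg; apply/existsP => -[i /andP [_]].
rewrite -nth_last nth_inj ?s_size ?ltn_eqF //.
by rewrite prednK // -s_size (leq_ltn_trans _ (lt_size i)).
Qed.

Lemma forall_ord_all M (s : seq nat) (P : pred nat) :
  (forall k, k \in s -> (k < M)%N) -> (forall k, k \notin s -> P k) ->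
  [forall k : 'I_M, P k] = all P s.
Proof.
move=> s_lt P_out; apply/forallP/allP => [P_ord k ks | P_s k].
  by have := P_ord (Ordinal (s_lt k ks)).
by case: (boolP (val k \in s)) => [/P_s | /P_out].
Qed.

Section SortedEnumeration.
Variable N : nat.
Implicit Types (B : {set 'I_N}) (k : nat).

Lemma aseq_setC B : aseq B = bseq (~: B). Proof. by []. Qed.

Lemma bseq_sorted B : sorted leq (bseq B).
Proof. exact: (sort_sorted leq_total). Qed.

Lemma bseq_uniq B : uniq (bseq B).
Proof.
rewrite sort_uniq map_inj_uniq ?enum_uniq //.
by move=> i j /eqP; rewrite eqSS => /eqP /val_inj.
Qed.

Lemma size_bseq B : size (bseq B) = #|B|.
Proof. by rewrite size_sort size_map -cardE. Qed.

Lemma mem_bseq B k : (k \in bseq B) = inS B k.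
Proof.
rewrite mem_sort; apply/mapP/existsP => [[i] | [i /andP [iB /eqP <-]]].
  by rewrite mem_enum => iB ->; exists i; rewrite iB eqxx.
by exists i; rewrite ?mem_enum.
Qed.

Lemma inS_range B k : inS B k -> (0 < k <= N)%N.
Proof. by case/existsP=> i /andP [_ /eqP <-]; rewrite /= ltn_ord. Qed.

Lemma inS_set0 k : inS (set0 : {set 'I_N}) k = false.
Proof. by apply/existsP => -[i]; rewrite inE. Qed.

Lemma inS_setC B k : inS (~: B) k = (0 < k <= N)%N && ~~ inS B k.
Proof.
apply/existsP/andP => [[i /andP [iB /eqP <-]] | [/andP [k_pos k_le] kB]].
  split; first by rewrite /= ltn_ord.
  apply/existsP => -[j /andP [jB /eqP /succn_inj /val_inj ji]].
  by move: iB; rewrite -ji inE jB.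
case: k k_pos k_le kB => // k _ k_lt kB; exists (Ordinal k_lt); rewrite inE eqxx andbT.
by apply: contra kB => kB; apply/existsP; exists (Ordinal k_lt); rewrite kB /=.
Qed.

Lemma mem_aseq B k : (k \in aseq B) = (0 < k <= N)%N && (k \notin bseq B).
Proof. by rewrite aseq_setC !mem_bseq inS_setC. Qed.

Lemma mem_aseq_bseq B k : (k \in aseq B ++ bseq B) = (0 < k <= N)%N.
Proof.
rewrite mem_cat mem_aseq.
case: (boolP (k \in bseq B)) => [kB | _]; rewrite ?orbT ?orbF ?andbT //.
by move: kB; rewrite mem_bseq => /inS_range ->.
Qed.

Lemma bseq_le_last B k : k \in bseq B -> (k <= last 0%N (bseq B))%N.
Proof.
move=> kB; rewrite -(nth_index 0%N kB) -nth_last.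
have k_idx : (index k (bseq B) < size (bseq B))%N by rewrite index_mem.
have size_pos : (0 < size (bseq B))%N := leq_ltn_trans (leq0n _) k_idx.
apply: (sorted_leq_nth leq_trans leqnn 0%N (bseq_sorted B)); rewrite ?inE ?prednK //.
by rewrite -ltnS prednK.
Qed.

Lemma c1_last_bseq B : (0 < last 0%N (bseq B) < N)%N -> c1 B (last 0%N (bseq B)).
Proof.
case/andP=> last_pos last_lt; rewrite /c1 (ltn_eqF last_lt) andbT -!mem_bseq.
have := mem_last 0%N (bseq B); rewrite inE (gtn_eqF last_pos) /= => ->.
by apply/negP => /bseq_le_last; rewrite ltnn.
Qed.

Lemma c2_c1C B k : c2 B k = c1 (~: B) k.
Proof. by rewrite /c2 /c1 !inS_setC negb_and negbK !andbA. Qed.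

Lemma c1_set0 k : c1 (set0 : {set 'I_N}) k = false.
Proof. by rewrite /c1 inS_set0. Qed.

Lemma c1_setT k : c1 [set: 'I_N] k = false.
Proof.
rewrite /c1 -setC0 !inS_setC !inS_set0 !andbT /=.
by apply/and3P => -[/andP [_ k_le]]; rewrite ltn_neqAle k_le andbT negbK => ->.
Qed.

End SortedEnumeration.

Lemma forall_sandwichE (T : finType) (s c q : pred T) :
  [&& [forall x, ~~ (s x && c x)], [forall x, s x ==> q x]
    & [forall x, q x ==> s x || c x]] =
  [forall x, s x == ~~ c x && q x].
Proof.
apply/and3P/forallP => [[/forallP sc /forallP sq /forallP qs] x | scq].
  by move: (sc x) (sq x) (qs x); case: (s x); case: (c x); case: (q x).
by split; apply/forallP => x; move: (scq x); case: (s x); case: (c x); case: (q x).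
Qed.

Section Shuffle.
Variables (m n : nat) (I : {set 'I_(m.-1)}) (J : {set 'I_(n.-1)}).
Variables (A : {set 'I_(m + n)}) (A_card : #|A| = n).

Lemma size_aseq : size (aseq A) = m.
Proof.
rewrite aseq_setC size_bseq; have := cardsC A.
by rewrite card_ord A_card addnC => /eqP; rewrite eqn_add2r => /eqP.
Qed.

Lemma aA_last : aA A m = last 0%N (aseq A).
Proof. by rewrite /aA -nth_last size_aseq. Qed.

Lemma bA_last : bA A n = last 0%N (bseq A).
Proof. by rewrite /bA -nth_last size_bseq A_card. Qed.

Lemma sharp_aseq k : k \in aseq A -> sharp I J A k = [exists i in I, aA A i.+1 == k].
Proof.
rewrite mem_aseq => /andP [_ kA].
rewrite /sharp (contraNF (exists_nth_mem _) kA) ?orbF //.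
by rewrite size_bseq A_card leq_pred.
Qed.

Lemma sharp_bseq k : k \in bseq A -> sharp I J A k = [exists j in J, bA A j.+1 == k].
Proof.
move=> kA; rewrite /sharp; have -> // : [exists i in I, aA A i.+1 == k] = false.
apply/negbTE/negP => /(exists_nth_mem _).
by rewrite size_aseq leq_pred mem_aseq kA andbF => /(_ isT).
Qed.

Lemma sharp_mem k : sharp I J A k -> k \in aseq A ++ bseq A.
Proof.
rewrite mem_cat; case/orP => /(exists_nth_mem _) -> //=; rewrite ?orbT //.
  by rewrite size_aseq leq_pred.
by rewrite size_bseq A_card leq_pred.
Qed.

Lemma shuffle_setE (P : pred nat) :
  (forall k, P k -> (0 < k <= m + n)%N) ->
  ~~ P (last 0%N (aseq A)) -> ~~ P (last 0%N (bseq A)) ->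
  ([set i : 'I_(m.-1) | P (aA A i.+1)] == I) &&
  ([set j : 'I_(n.-1) | P (bA A j.+1)] == J) =
  [forall k : 'I_(m + n).+2, sharp I J A k == P k].
Proof.
move=> P_range P_alast P_blast.
(* [aA A i.+1] and [bA A j.+1] unfold to [nth 0 (aseq A) i] and [nth 0 (bseq A) j]. *)
rewrite (set_nth_eqE (s := aseq A) I (bseq_uniq _) size_aseq P_alast).
rewrite (set_nth_eqE J (bseq_uniq A) (etrans (size_bseq A) A_card) P_blast).
rewrite -(@eq_in_all _ (fun k => sharp I J A k == P k)); last by move=> k /sharp_aseq ->.
rewrite -[X in _ && X](@eq_in_all _ (fun k => sharp I J A k == P k)); last first.
  by move=> k /sharp_bseq ->.
rewrite -all_cat; symmetry; apply: forall_ord_all => k.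
  by rewrite mem_aseq_bseq ltnS => /andP [_ /leqW].
move=> k_out; have sharp_out : sharp I J A k = false.
  by apply: contraNF k_out => /sharp_mem.
have P_out : P k = false by apply: contraNF k_out => /P_range; rewrite mem_aseq_bseq.
by rewrite sharp_out P_out.
Qed.

Lemma cA_degenerate k : (m == 0)%N || (n == 0)%N -> cA A k = false.
Proof.
rewrite /cA c2_c1C; case/orP => /eqP mn0.
  have -> : A = setT.
    by apply/eqP; rewrite eqEcard subsetT cardsT card_ord A_card /= mn0.
  by rewrite setCT c1_setT c1_set0.
have -> : A = set0 by apply/eqP; rewrite -cards_eq0 A_card mn0.
by rewrite setC0 c1_setT c1_set0.
Qed.

End Shuffle.

Lemma psinuE (R : numFieldType) nu (x : 'Z_nu) : (1 < nu)%N ->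
  psinu R x = if x == 0 then 1 else (1 - nu%:R)^-1.
Proof.
move=> nu_gt1; rewrite /psinu; case: eqP => // _.
have -> : nu%:R = nu.-1%:R + 1 :> R by rewrite natr1 prednK // ltnW.
by rewrite -invrN opprD addrCA subrr addr0.
Qed.

Section Coordinates.
Variables (nu N : nat) (g : Q nu N).

Lemma coord_ord (i : 'I_N.-1) : coord g i.+1 = g i.
Proof. by rewrite /coord valK. Qed.

Lemma coord_range k : coord g k != 0 -> (0 < k < N)%N.
Proof.
case: k => [|k] //=; case: insubP => [i _ <- _ | _]; last by rewrite eqxx.
by rewrite -ltn_predRL ltn_ord.
Qed.

Lemma coord_N : coord g N = 0.
Proof. by apply/eqP/negPn/negP => /coord_range; rewrite ltnn andbF. Qed.

Lemma inS_support k : inS [set i | g i != 0] k = (coord g k != 0).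
Proof.
apply/existsP/idP => [[i /andP [gi /eqP <-]] | gk].
  by rewrite coord_ord; rewrite inE in gi.
have /andP [k_pos k_lt] := coord_range gk; case: k k_pos k_lt gk => // k _ k_lt gk.
have k_lt' : (k < N.-1)%N by rewrite -ltnS prednK // (leq_ltn_trans _ k_lt).
by exists (Ordinal k_lt'); rewrite inE -coord_ord gk /=.
Qed.

Lemma prod_psinu_coord (R : numFieldType) (P : pred nat) : (1 < nu)%N ->
  \prod_(1 <= k < N | P k) psinu R (coord g k) =
  ((1 - nu%:R)^-1) ^+ #|[set i in [set i | g i != 0] | P i.+1]|.
Proof.
move=> nu_gt1; rewrite big_add1 big_mkord -prodr_const [LHS]big_mkcond [RHS]big_mkcond.
apply: eq_bigr => i _; rewrite !inE coord_ord psinuE //.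
by case: (g i == 0); case: (P i.+1).
Qed.

End Coordinates.

Lemma sum_kappa (R : numFieldType) nu N (F : {set 'I_N.-1} -> R) (g : Q nu N) :
  \sum_K F K * kappa R K g = F [set i | g i != 0].
Proof.
rewrite (bigD1 [set i | g i != 0]) //= big1 => [|K K_supp].
  by rewrite /kappa eqxx mulr1 addr0.
by rewrite /kappa eq_sym (negbTE K_supp) mulr0.
Qed.

Section ShuffleTerm.
Variables (R : numFieldType) (nu m n : nat) (nu_gt1 : (1 < nu)%N).
Variables (I : {set 'I_(m.-1)}) (J : {set 'I_(n.-1)}) (g : Q nu (m + n)).
Variables (A : {set 'I_(m + n)}) (A_card : #|A| = n).

Let g' k := if cA A k || (k == m + n)%N then 0 else coord g k.

Lemma g'_neq0 k : (g' k != 0) = ~~ cA A k && inS [set i | g i != 0] k.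
Proof.
rewrite /g' inS_support; case: (cA A k) => /=; first by rewrite ?eqxx.
by case: (k =P (m + n)%N) => [-> | _]; rewrite ?coord_N ?eqxx.
Qed.

Lemma g'_last_bseq (B : {set 'I_(m + n)}) :
  (forall k, c1 B k -> cA A k) -> g' (last 0%N (bseq B)) = 0.
Proof.
move=> c1_cA; apply/eqP/negPn/negP; rewrite g'_neq0 inS_support.
by case/andP => /negP ncA /coord_range /c1_last_bseq /c1_cA.
Qed.

Lemma g'_aA_last : g' (aA A m) = 0.
Proof. by rewrite aA_last // g'_last_bseq // => k; rewrite -c2_c1C /cA orbC => ->. Qed.

Lemma g'_bA_last : g' (bA A n) = 0.
Proof. by rewrite bA_last // g'_last_bseq // => k; rewrite /cA => ->. Qed.

Lemma kappa_mul_shuffle (e : nat -> 'Z_nu) : (forall k, (e k != 0) = (g' k != 0)) ->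
  kappa R I [ffun i => e (aA A (val i).+1)] * kappa R J [ffun j => e (bA A (val j).+1)] =
  if [forall k : 'I_(m + n).+2, sharp I J A k == ~~ cA A k && inS [set i | g i != 0] k]
  then 1 else 0.
Proof.
move=> e_g'.
have g'_range k : g' k != 0 -> (0 < k <= m + n)%N.
  by rewrite g'_neq0 inS_support => /andP [_ /coord_range /andP [-> /ltnW]].
have g'_alast : ~~ (g' (last 0%N (aseq A)) != 0) by rewrite -aA_last // g'_aA_last negbK.
have g'_blast : ~~ (g' (last 0%N (bseq A)) != 0) by rewrite -bA_last // g'_bA_last negbK.
have -> : [forall k : 'I_(m + n).+2,
             sharp I J A k == ~~ cA A k && inS [set i | g i != 0] k] =
          [forall k : 'I_(m + n).+2, sharp I J A k == (g' k != 0)].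
  by apply: eq_forallb => k; rewrite g'_neq0.
rewrite -(shuffle_setE (P := fun k => g' k != 0) I J A_card g'_range g'_alast g'_blast).
rewrite /kappa.
have supp_ffun p (s : 'I_p -> nat) :
  [set i | [ffun i => e (s i)] i != 0] = [set i | g' (s i) != 0].
  by apply/setP => i; rewrite !inE ffunE e_g'.
rewrite !supp_ffun.
by case: ifP; case: ifP; rewrite ?mulr1 ?mulr0 ?mul0r.
Qed.

Lemma mA_kappa :
  mA A (kappa R I) (kappa R J) g =
  if [forall k : 'I_(m + n).+2, sharp I J A k == ~~ cA A k && inS [set i | g i != 0] k]
  then ((1 - nu%:R)^-1) ^+ #|[set i in [set i | g i != 0] | c2 A (val i).+1]| else 0.
Proof.
rewrite /mA; case: ifP => [degenerate | _].
  have cA_false k := cA_degenerate A_card k degenerate.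
  rewrite (@kappa_mul_shuffle (coord g)); last first.
    move=> k; rewrite /g' cA_false /=.
    by case: (k =P (m + n)%N) => // ->; rewrite coord_N.
  have -> : [set i in [set i | g i != 0] | c2 A (val i).+1] = set0.
    apply/setP => i; rewrite !inE.
    by move/negbT: (cA_false i.+1) => /norP [_ /negbTE ->]; rewrite andbF.
  by rewrite cards0 expr0.
have psinu0 : psinu R (0 : 'Z_nu) = 1 by rewrite /psinu eqxx.
rewrite /sA -/(g' (aA A m)) -/(g' (bA A n)) g'_aA_last g'_bA_last psinu0 !mulr1.
rewrite (@kappa_mul_shuffle g') // prod_psinu_coord //.
by case: ifP; rewrite ?mulr1 ?mulr0.
Qed.

End ShuffleTerm.

Theorem proposition3p15 (R : numFieldType) (nu m n : nat) (hnu : (1 < nu)%N)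
  (I : {set 'I_(m.-1)}) (J : {set 'I_(n.-1)}) (g : Q nu (m + n)) :
  mprod (kappa R I) (kappa R J) g =
  \sum_(K : {set 'I_((m + n).-1)}) dK R nu I J K * kappa R K g.
Proof.
rewrite sum_kappa /mprod /dK big_mkcondr.
by apply: eq_bigr => A /eqP A_card; rewrite forall_sandwichE mA_kappa.
Qed.
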